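(* Let $\alpha\in(0,1)$ satisfy $\frac{1-\alpha}{1+\alpha}<\alpha^{1/2}$, and fix $W_0,H_0>0$, $b_x,b_y\in\mathbb{R}$, $i,j,m,n\in\mathbb{Z}$. For $(i_1,i_2,j_1,j_2,m_1,m_2,n_1,n_2)\in[-\tfrac12,\tfrac12]^8$ define two boxes by $w_k=W_0/\alpha^{i+i_k}$, $h_k=H_0/\alpha^{j+j_k}$, $x_k=b_x\delta_i+(m+m_k)\delta_i$, $y_k=b_y\delta_j+(n+n_k)\delta_j$ ($k=1,2$), with $\delta_i=\frac{W_0}{\alpha^{i}}\frac{1-\alpha}{1+\alpha}$, $\delta_j=\frac{H_0}{\alpha^{j}}\frac{1-\alpha}{1+\alpha}$. Then the minimum of the IoU of the two boxes over $[-\tfrac12,\tfrac12]^8$ is attained at a vertex, i.e. at a point where each of $i_k,j_k,m_k,n_k$ ($k=1,2$) equals $-\tfrac12$ or $\tfrac12$. Consequently, the lower bound on the IoU of any two boxes hashed to the same cell equals the minimum of the IoU over the $2^8$ vertices (and is independent of $W_0,H_0,b_x,b_y,i,j,m,n$). *)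

From Stdlib Require Import Reals.
Open Scope R_scope.

(* Axis-aligned box given by its centre (x, y), width w and height h. *)
Record box := mkBox { bx : R; by_ : R; bw : R; bh : R }.

Definition overlap1 (c1 l1 c2 l2 : R) : R :=
  Rmax 0 (Rmin (c1 + l1 / 2) (c2 + l2 / 2) - Rmax (c1 - l1 / 2) (c2 - l2 / 2)).

Definition inter_area (B1 B2 : box) : R :=
  overlap1 (bx B1) (bw B1) (bx B2) (bw B2) * overlap1 (by_ B1) (bh B1) (by_ B2) (bh B2).

Definition IoU (B1 B2 : box) : R :=
  inter_area B1 B2 / (bw B1 * bh B1 + bw B2 * bh B2 - inter_area B1 B2).

Record params := mkParams {
  pW0 : R; pH0 : R; pbx : R; pby : R; pi : Z; pj : Z; pm : Z; pn : Z }.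

Definition params_ok (P : params) : Prop := 0 < pW0 P /\ 0 < pH0 P.

Definition delta_i (alpha : R) (P : params) : R :=
  pW0 P / Rpower alpha (IZR (pi P)) * ((1 - alpha) / (1 + alpha)).
Definition delta_j (alpha : R) (P : params) : R :=
  pH0 P / Rpower alpha (IZR (pj P)) * ((1 - alpha) / (1 + alpha)).

(* A point of [-1/2,1/2]^8 is encoded as t : nat -> R, with
   (i1,i2,j1,j2,m1,m2,n1,n2) = (t 0, t 1, ..., t 7); other values are unused. *)
Definition in_cube (t : nat -> R) : Prop :=
  forall k, (k < 8)%nat -> -(1/2) <= t k <= 1/2.
Definition is_vertex (t : nat -> R) : Prop :=
  forall k, (k < 8)%nat -> t k = -(1/2) \/ t k = 1/2.

(* Box number k (k = 0 for box 1, k = 1 for box 2). *)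
Definition box_of (alpha : R) (P : params) (t : nat -> R) (k : nat) : box :=
  mkBox
    (pbx P * delta_i alpha P + (IZR (pm P) + t (4 + k)%nat) * delta_i alpha P)
    (pby P * delta_j alpha P + (IZR (pn P) + t (6 + k)%nat) * delta_j alpha P)
    (pW0 P / Rpower alpha (IZR (pi P) + t k))
    (pH0 P / Rpower alpha (IZR (pj P) + t (2 + k)%nat)).

Definition iou_of (alpha : R) (P : params) (t : nat -> R) : R :=
  IoU (box_of alpha P t 0) (box_of alpha P t 1).

From Stdlib Require Import Reals Lra Lia.
Open Scope R_scope.

(* Each box_of is obtained from a parameter-free box
      [nbox alpha t k] (centre c*t, width alpha^(-s), with c = (1-a)/(1+a))
      by a positive scaling and a translation on each axis; IoU is invariant
      under such maps, so iou_of alpha P t = niou alpha t for every admissible P.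
   2. Quasi-concavity.  The overlap length of two intervals is a concave
      function of (centres, lengths), and the total area is affine in the
      width of one box; hence I/(S - I) is quasi-concave along any segment in
      the (centre, width) data of the first box.  Since alpha^(-s) is monotone
      in s, moving one width exponent or one centre offset traces such a
      segment, so niou is quasi-concave in each coordinate separately.  The
      hypothesis (1-a)/(1+a) < sqrt a keeps every overlap positive on the cube.
      Exchanging the two boxes or the two axes leaves niou invariant, so only
      the width and centre of the first box in the x-direction need a proof.
   3. Vertex minimum.  A function on [-1/2,1/2]^8 that is quasi-concave in each
      coordinate attains its minimum at a vertex (induction on the number of
      coordinates fixed to +-1/2). *)

Definition signed_overlap (c1 l1 c2 l2 : R) : R :=
  Rmin (c1 + l1 / 2) (c2 + l2 / 2) - Rmax (c1 - l1 / 2) (c2 - l2 / 2).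

Lemma overlap1_pos c1 l1 c2 l2 :
  0 < signed_overlap c1 l1 c2 l2 -> overlap1 c1 l1 c2 l2 = signed_overlap c1 l1 c2 l2.
Proof. intros H; unfold overlap1; fold (signed_overlap c1 l1 c2 l2); apply Rmax_right; lra. Qed.

Lemma signed_overlap_le c1 l1 c2 l2 :
  signed_overlap c1 l1 c2 l2 <= l1 /\ signed_overlap c1 l1 c2 l2 <= l2.
Proof.
  unfold signed_overlap.
  pose proof (Rmin_l (c1 + l1/2) (c2 + l2/2)); pose proof (Rmin_r (c1 + l1/2) (c2 + l2/2)).
  pose proof (Rmax_l (c1 - l1/2) (c2 - l2/2)); pose proof (Rmax_r (c1 - l1/2) (c2 - l2/2)).
  lra.
Qed.

(* Concavity of the overlap in all four arguments jointly: Rmin of affine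
   maps is concave and Rmax of affine maps is convex. *)
Lemma signed_overlap_concave lam a1 a2 a3 a4 b1 b2 b3 b4 : 0 <= lam <= 1 ->
  lam * signed_overlap a1 a2 a3 a4 + (1 - lam) * signed_overlap b1 b2 b3 b4 <=
  signed_overlap (lam*a1 + (1-lam)*b1) (lam*a2 + (1-lam)*b2)
                 (lam*a3 + (1-lam)*b3) (lam*a4 + (1-lam)*b4).
Proof.
  intros Hl; unfold signed_overlap.
  pose proof (Rmin_l (a1 + a2/2) (a3 + a4/2)); pose proof (Rmin_r (a1 + a2/2) (a3 + a4/2)).
  pose proof (Rmin_l (b1 + b2/2) (b3 + b4/2)); pose proof (Rmin_r (b1 + b2/2) (b3 + b4/2)).
  pose proof (Rmax_l (a1 - a2/2) (a3 - a4/2)); pose proof (Rmax_r (a1 - a2/2) (a3 - a4/2)).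
  pose proof (Rmax_l (b1 - b2/2) (b3 - b4/2)); pose proof (Rmax_r (b1 - b2/2) (b3 - b4/2)).
  assert (lam * Rmin (a1 + a2/2) (a3 + a4/2) + (1-lam) * Rmin (b1 + b2/2) (b3 + b4/2) <=
          Rmin (lam*a1 + (1-lam)*b1 + (lam*a2 + (1-lam)*b2)/2)
               (lam*a3 + (1-lam)*b3 + (lam*a4 + (1-lam)*b4)/2)) by (apply Rmin_glb; nra).
  assert (Rmax (lam*a1 + (1-lam)*b1 - (lam*a2 + (1-lam)*b2)/2)
               (lam*a3 + (1-lam)*b3 - (lam*a4 + (1-lam)*b4)/2) <=
          lam * Rmax (a1 - a2/2) (a3 - a4/2) + (1-lam) * Rmax (b1 - b2/2) (b3 - b4/2))
    by (apply Rmax_lub; nra).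
  lra.
Qed.

(* The map (G, L) |-> G / (L - G) is quasi-concave on 0 < G < L when L is
   affine and G concave along the segment: its superlevel sets
   {G >= m (L - G)} are convex. *)
Lemma ratio_quasiconcave lam Gp Gq Gr Lp Lq Lr : 0 <= lam <= 1 ->
  lam * Gp + (1 - lam) * Gr <= Gq -> Lq = lam * Lp + (1 - lam) * Lr ->
  0 < Gp < Lp -> 0 < Gr < Lr -> 0 < Gq < Lq ->
  Rmin (Gp / (Lp - Gp)) (Gr / (Lr - Gr)) <= Gq / (Lq - Gq).
Proof.
  intros Hl Hconc HL Hp Hr Hq.
  set (m := Rmin (Gp / (Lp - Gp)) (Gr / (Lr - Gr))).
  assert (Hm0 : 0 <= m)
    by (apply Rmin_glb; apply Rlt_le, Rdiv_lt_0_compat; lra).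
  assert (Hmp : m * (Lp - Gp) <= Gp).
  { apply (Rmult_le_reg_r (/ (Lp - Gp))); [apply Rinv_0_lt_compat; lra|].
    rewrite Rmult_assoc, Rinv_r by lra. rewrite Rmult_1_r; apply Rmin_l. }
  assert (Hmr : m * (Lr - Gr) <= Gr).
  { apply (Rmult_le_reg_r (/ (Lr - Gr))); [apply Rinv_0_lt_compat; lra|].
    rewrite Rmult_assoc, Rinv_r by lra. rewrite Rmult_1_r; apply Rmin_r. }
  assert (Hmq : m * (Lq - Gq) <= Gq) by (subst Lq; nra).
  apply (Rmult_le_reg_r (Lq - Gq)); [lra|].
  unfold Rdiv; rewrite Rmult_assoc, Rinv_l by lra; lra.
Qed.

Lemma iou_quasiconcave_first_x lam xp wp xq wq xr wr y1 h1 x2 y2 w2 h2 :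
  0 <= lam <= 1 -> xq = lam * xp + (1 - lam) * xr -> wq = lam * wp + (1 - lam) * wr ->
  0 < signed_overlap xp wp x2 w2 -> 0 < signed_overlap xq wq x2 w2 ->
  0 < signed_overlap xr wr x2 w2 -> 0 < signed_overlap y1 h1 y2 h2 ->
  Rmin (IoU (mkBox xp y1 wp h1) (mkBox x2 y2 w2 h2))
       (IoU (mkBox xr y1 wr h1) (mkBox x2 y2 w2 h2))
  <= IoU (mkBox xq y1 wq h1) (mkBox x2 y2 w2 h2).
Proof.
  intros Hl Hx Hw Pp Pq Pr Py.
  unfold IoU, inter_area; simpl; rewrite !overlap1_pos by assumption.
  pose proof (signed_overlap_le xp wp x2 w2); pose proof (signed_overlap_le xq wq x2 w2).
  pose proof (signed_overlap_le xr wr x2 w2); pose proof (signed_overlap_le y1 h1 y2 h2).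
  assert (Hconc : lam * signed_overlap xp wp x2 w2 + (1 - lam) * signed_overlap xr wr x2 w2
                  <= signed_overlap xq wq x2 w2).
  { replace (signed_overlap xq wq x2 w2) with
      (signed_overlap (lam*xp + (1-lam)*xr) (lam*wp + (1-lam)*wr)
                      (lam*x2 + (1-lam)*x2) (lam*w2 + (1-lam)*w2))
      by (subst; f_equal; ring).
    apply signed_overlap_concave; lra. }
  set (oy := signed_overlap y1 h1 y2 h2) in *.
  apply (ratio_quasiconcave lam); subst wq; nra.
Qed.

Lemma IoU_comm B1 B2 : IoU B1 B2 = IoU B2 B1.
Proof.
  destruct B1 as [x1 y1 w1 h1], B2 as [x2 y2 w2 h2]; unfold IoU, inter_area, overlap1; simpl.
  rewrite (Rmin_comm (x1 + _)), (Rmax_comm (x1 - _)),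
          (Rmin_comm (y1 + _)), (Rmax_comm (y1 - _)).
  f_equal; ring.
Qed.

Lemma IoU_transpose x1 y1 w1 h1 x2 y2 w2 h2 :
  IoU (mkBox x1 y1 w1 h1) (mkBox x2 y2 w2 h2) = IoU (mkBox y1 x1 h1 w1) (mkBox y2 x2 h2 w2).
Proof. unfold IoU, inter_area; simpl; f_equal; ring. Qed.


Definition upd (t : nat -> R) (k : nat) (v : R) : nat -> R :=
  fun n => if Nat.eqb n k then v else t n.

Lemma upd_eq t k v : upd t k v k = v.
Proof. unfold upd; rewrite Nat.eqb_refl; reflexivity. Qed.

Lemma upd_neq t k v n : n <> k -> upd t k v n = t n.
Proof. intros Hn; unfold upd; apply Nat.eqb_neq in Hn; rewrite Hn; reflexivity. Qed.

Lemma upd_cube t k v : in_cube t -> -(1/2) <= v <= 1/2 -> in_cube (upd t k v).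
Proof.
  intros Ht Hv n Hn; destruct (Nat.eq_dec n k) as [->|Hnk];
    [rewrite upd_eq | rewrite upd_neq]; auto.
Qed.

Lemma vertex_cube v : is_vertex v -> in_cube v.
Proof. intros Hv k Hk; destruct (Hv k Hk) as [-> | ->]; lra. Qed.

Section VertexMinimum.

Variable F : (nat -> R) -> R.
Hypothesis F_local : forall u t, (forall k, (k < 8)%nat -> u k = t k) -> F u = F t.

Definition quasiconcave_in (k : nat) : Prop :=
  forall t, in_cube t -> Rmin (F (upd t k (-(1/2)))) (F (upd t k (1/2))) <= F t.

Lemma quasiconcave_transport (p : nat -> nat) k :
  (forall n, p (p n) = n) -> (forall n, (n < 8)%nat -> (p n < 8)%nat) ->
  (forall t, F (fun n => t (p n)) = F t) ->
  quasiconcave_in k -> quasiconcave_in (p k).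
Proof.
  intros Hinv Hrange Hsym Hk t Ht.
  assert (Hupd : forall v, F (upd (fun n => t (p n)) k v) = F (upd t (p k) v)).
  { intros v; rewrite <- (Hsym (upd t (p k) v)); apply F_local; intros n _.
    destruct (Nat.eq_dec n k) as [->|Hnk]; [rewrite !upd_eq; reflexivity|].
    rewrite !upd_neq; [reflexivity| |assumption].
    intros E; apply Hnk; rewrite <- (Hinv n), E; apply Hinv. }
  rewrite <- !Hupd, <- (Hsym t); apply Hk.
  intros n Hn; apply Ht, Hrange, Hn.
Qed.

Lemma partial_vertex_minimum n : (n <= 8)%nat ->
  (forall k, (k < 8)%nat -> quasiconcave_in k) ->
  forall t, exists v,
    (forall k, (n <= k < 8)%nat -> v k = t k) /\
    (forall k, (k < n)%nat -> v k = -(1/2) \/ v k = 1/2) /\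
    (forall u, in_cube u -> (forall k, (n <= k < 8)%nat -> u k = t k) -> F v <= F u).
Proof.
  intros Hn Hqc; induction n as [|n IH]; intros t.
  - exists t; split; [|split]; [reflexivity | lia |].
    intros u _ Hu; rewrite (F_local u t); [lra|]; intros k Hk; apply Hu; lia.
  - destruct (IH ltac:(lia) (upd t n (-(1/2)))) as [v1 [A1 [B1 C1]]].
    destruct (IH ltac:(lia) (upd t n (1/2))) as [v2 [A2 [B2 C2]]].
    assert (Hagree : forall u w, (forall k, (S n <= k < 8)%nat -> u k = t k) ->
              forall k, (n <= k < 8)%nat -> upd u n w k = upd t n w k).
    { intros u w Hu k Hk; destruct (Nat.eq_dec k n) as [->|Hkn];
        [rewrite !upd_eq | rewrite !upd_neq, Hu]; auto; lia. }
    assert (Hpick : exists v, (v = v1 \/ v = v2) /\ F v = Rmin (F v1) (F v2)).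
    { destruct (Rle_dec (F v1) (F v2));
        [exists v1; rewrite Rmin_left | exists v2; rewrite Rmin_right]; auto; lra. }
    destruct Hpick as [v [Hv Fv]]; exists v; split; [|split].
    + intros k Hk; destruct Hv as [-> | ->]; [rewrite A1 | rewrite A2];
        try apply upd_neq; lia.
    + intros k Hk; destruct (Nat.eq_dec k n) as [->|Hkn].
      * destruct Hv as [-> | ->]; [rewrite A1 | rewrite A2]; try lia; rewrite upd_eq; auto.
      * destruct Hv as [-> | ->]; [apply B1 | apply B2]; lia.
    + intros u Hu Hut; rewrite Fv.
      assert (F v1 <= F (upd u n (-(1/2))))
        by (apply C1; [apply upd_cube; auto; lra | apply Hagree; assumption]).
      assert (F v2 <= F (upd u n (1/2)))
        by (apply C2; [apply upd_cube; auto; lra | apply Hagree; assumption]).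
      pose proof (Hqc n ltac:(lia) u Hu).
      unfold Rmin in *; repeat destruct Rle_dec; lra.
Qed.

Theorem vertex_minimum :
  (forall k, (k < 8)%nat -> quasiconcave_in k) ->
  exists v, is_vertex v /\ forall t, in_cube t -> F v <= F t.
Proof.
  intros Hqc; destruct (partial_vertex_minimum 8 ltac:(lia) Hqc (fun _ => 0))
    as [v [_ [Hv Hmin]]].
  exists v; split; [exact Hv|].
  intros t Ht; apply Hmin; [exact Ht | intros; lia].
Qed.

End VertexMinimum.

Definition ctr_scale (alpha : R) : R := (1 - alpha) / (1 + alpha).
Definition width (alpha s : R) : R := / Rpower alpha s.

Lemma width_lt alpha s1 s2 : 0 < alpha < 1 -> s1 < s2 -> width alpha s1 < width alpha s2.
Proof.
  intros Ha Hs; unfold width, Rpower; rewrite <- !exp_Ropp; apply exp_increasing.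
  assert (ln alpha < 0) by (rewrite <- ln_1; apply ln_increasing; lra).
  nra.
Qed.

Lemma width_le alpha s1 s2 : 0 < alpha < 1 -> s1 <= s2 -> width alpha s1 <= width alpha s2.
Proof.
  intros Ha [Hs | ->]; [apply Rlt_le, width_lt|]; lra.
Qed.

Lemma width_min alpha : 0 < alpha < 1 -> width alpha (-(1/2)) = sqrt alpha.
Proof.
  intros Ha; unfold width; rewrite Rpower_Ropp, Rinv_inv.
  replace (1/2) with (/2) by field; apply Rpower_sqrt; lra.
Qed.

Lemma width_convex_comb alpha s : 0 < alpha < 1 -> -(1/2) <= s <= 1/2 ->
  exists lam, 0 <= lam <= 1 /\
    width alpha s = lam * width alpha (-(1/2)) + (1 - lam) * width alpha (1/2).
Proof.
  intros Ha Hs.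
  pose proof (width_lt alpha (-(1/2)) (1/2) Ha ltac:(lra)).
  pose proof (width_le alpha (-(1/2)) s Ha ltac:(lra)).
  pose proof (width_le alpha s (1/2) Ha ltac:(lra)).
  set (A := width alpha (-(1/2))) in *; set (B := width alpha (1/2)) in *;
  set (W := width alpha s) in *.
  exists ((B - W) / (B - A)); split; [split|].
  - unfold Rdiv; apply Rmult_le_pos; [| apply Rlt_le, Rinv_0_lt_compat]; lra.
  - apply (Rmult_le_reg_r (B - A)); [lra|].
    unfold Rdiv; rewrite Rmult_assoc, Rinv_l by lra; lra.
  - field; lra.
Qed.

(* The hashing condition (1-a)/(1+a) < sqrt a: two normalised intervals
   always overlap, since the centres differ by at most c while each
   half-length is at least sqrt a / 2. *)
Lemma normalised_overlap_pos alpha a1 a2 s1 s2 : 0 < alpha < 1 ->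
  ctr_scale alpha < sqrt alpha ->
  -(1/2) <= a1 <= 1/2 -> -(1/2) <= a2 <= 1/2 -> -(1/2) <= s1 <= 1/2 -> -(1/2) <= s2 <= 1/2 ->
  0 < signed_overlap (ctr_scale alpha * a1) (width alpha s1)
                     (ctr_scale alpha * a2) (width alpha s2).
Proof.
  intros Ha Hc H1 H2 H3 H4.
  assert (0 <= ctr_scale alpha) by (apply Rlt_le, Rdiv_lt_0_compat; lra).
  pose proof (width_le alpha (-(1/2)) s1 Ha ltac:(lra)).
  pose proof (width_le alpha (-(1/2)) s2 Ha ltac:(lra)).
  rewrite width_min in * by assumption.
  assert (ctr_scale alpha * (a1 - a2) <= ctr_scale alpha) by nra.
  assert (ctr_scale alpha * (a2 - a1) <= ctr_scale alpha) by nra.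
  unfold signed_overlap, Rmin, Rmax; repeat destruct Rle_dec; lra.
Qed.

Definition nbox (alpha : R) (t : nat -> R) (k : nat) : box :=
  mkBox (ctr_scale alpha * t (4 + k)%nat) (ctr_scale alpha * t (6 + k)%nat)
        (width alpha (t k)) (width alpha (t (2 + k)%nat)).

Definition niou (alpha : R) (t : nat -> R) : R := IoU (nbox alpha t 0) (nbox alpha t 1).

Lemma niou_local alpha u t : (forall k, (k < 8)%nat -> u k = t k) -> niou alpha u = niou alpha t.
Proof.
  intros H; unfold niou, nbox; simpl.
  rewrite (H 0%nat), (H 1%nat), (H 2%nat), (H 3%nat), (H 4%nat), (H 5%nat), (H 6%nat),
          (H 7%nat) by lia.
  reflexivity.
Qed.

Definition swap_boxes (n : nat) : nat :=
  match n with
  | 0 => 1 | 1 => 0 | 2 => 3 | 3 => 2 | 4 => 5 | 5 => 4 | 6 => 7 | 7 => 6 | _ => n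
  end%nat.

Definition swap_axes (n : nat) : nat :=
  match n with
  | 0 => 2 | 1 => 3 | 2 => 0 | 3 => 1 | 4 => 6 | 5 => 7 | 6 => 4 | 7 => 5 | _ => n
  end%nat.

Lemma swap_boxes_inv n : swap_boxes (swap_boxes n) = n.
Proof. do 8 (destruct n as [|n]; [reflexivity|]); reflexivity. Qed.

Lemma swap_axes_inv n : swap_axes (swap_axes n) = n.
Proof. do 8 (destruct n as [|n]; [reflexivity|]); reflexivity. Qed.

Lemma swap_boxes_range n : (n < 8)%nat -> (swap_boxes n < 8)%nat.
Proof. intros Hn; do 8 (destruct n as [|n]; [simpl; lia|]); lia. Qed.

Lemma swap_axes_range n : (n < 8)%nat -> (swap_axes n < 8)%nat.
Proof. intros Hn; do 8 (destruct n as [|n]; [simpl; lia|]); lia. Qed.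

Lemma niou_swap_boxes alpha t : niou alpha (fun n => t (swap_boxes n)) = niou alpha t.
Proof. unfold niou; rewrite IoU_comm; reflexivity. Qed.

Lemma niou_swap_axes alpha t : niou alpha (fun n => t (swap_axes n)) = niou alpha t.
Proof. unfold niou, nbox; simpl; rewrite IoU_transpose; reflexivity. Qed.

Section Quasiconcavity.

Variable alpha : R.
Hypothesis Ha : 0 < alpha < 1.
Hypothesis Hc : ctr_scale alpha < sqrt alpha.

(* The width of the first box along x: the extreme widths bracket the
   current one, and nothing else moves. *)
Lemma niou_quasiconcave_width : quasiconcave_in (niou alpha) 0.
Proof.
  intros t Ht; unfold niou, nbox, upd; simpl.
  pose proof (Ht 0%nat ltac:(lia)); pose proof (Ht 1%nat ltac:(lia));
  pose proof (Ht 2%nat ltac:(lia)); pose proof (Ht 3%nat ltac:(lia));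
  pose proof (Ht 4%nat ltac:(lia)); pose proof (Ht 5%nat ltac:(lia));
  pose proof (Ht 6%nat ltac:(lia)); pose proof (Ht 7%nat ltac:(lia)).
  destruct (width_convex_comb alpha (t 0%nat) Ha ltac:(assumption)) as [lam [Hl Hw]].
  apply (iou_quasiconcave_first_x lam);
    first [ assumption | ring | apply normalised_overlap_pos; auto; lra ].
Qed.

(* The centre of the first box along x moves affinely with its offset. *)
Lemma niou_quasiconcave_centre : quasiconcave_in (niou alpha) 4.
Proof.
  intros t Ht; unfold niou, nbox, upd; simpl.
  pose proof (Ht 0%nat ltac:(lia)); pose proof (Ht 1%nat ltac:(lia));
  pose proof (Ht 2%nat ltac:(lia)); pose proof (Ht 3%nat ltac:(lia));
  pose proof (Ht 4%nat ltac:(lia)); pose proof (Ht 5%nat ltac:(lia));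
  pose proof (Ht 6%nat ltac:(lia)); pose proof (Ht 7%nat ltac:(lia)).
  apply (iou_quasiconcave_first_x (1/2 - t 4%nat));
    first [ lra | ring | apply normalised_overlap_pos; auto; lra ].
Qed.

(* The remaining six coordinates are images of 0 and 4 under the box and
   axis exchanges. *)
Lemma niou_quasiconcave k : (k < 8)%nat -> quasiconcave_in (niou alpha) k.
Proof.
  intros Hk.
  pose proof (niou_local alpha) as Hloc.
  assert (Hb : forall k, quasiconcave_in (niou alpha) k ->
                 quasiconcave_in (niou alpha) (swap_boxes k))
    by (intros; apply quasiconcave_transport; auto using swap_boxes_inv,
          swap_boxes_range, niou_swap_boxes).
  assert (Hx : forall k, quasiconcave_in (niou alpha) k ->
                 quasiconcave_in (niou alpha) (swap_axes k))
    by (intros; apply quasiconcave_transport; auto using swap_axes_inv,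
          swap_axes_range, niou_swap_axes).
  pose proof niou_quasiconcave_width as Q0; pose proof niou_quasiconcave_centre as Q4.
  do 8 (destruct k as [|k]; [first [ exact Q0 | exact Q4 | exact (Hb _ Q0)
     | exact (Hb _ Q4) | exact (Hx _ Q0) | exact (Hx _ Q4) | exact (Hb _ (Hx _ Q0))
     | exact (Hb _ (Hx _ Q4)) ]|]).
  lia.
Qed.

End Quasiconcavity.

Lemma overlap1_affine s o c1 l1 c2 l2 : 0 < s ->
  overlap1 (s * c1 + o) (s * l1) (s * c2 + o) (s * l2) = s * overlap1 c1 l1 c2 l2.
Proof. intros Hs; unfold overlap1, Rmin, Rmax; repeat destruct Rle_dec; nra. Qed.

Lemma IoU_affine sx sy ox oy x1 y1 w1 h1 x2 y2 w2 h2 : 0 < sx -> 0 < sy ->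
  IoU (mkBox (sx * x1 + ox) (sy * y1 + oy) (sx * w1) (sy * h1))
      (mkBox (sx * x2 + ox) (sy * y2 + oy) (sx * w2) (sy * h2))
  = IoU (mkBox x1 y1 w1 h1) (mkBox x2 y2 w2 h2).
Proof.
  intros Hx Hy; unfold IoU, inter_area; simpl; rewrite !overlap1_affine by assumption.
  set (A := overlap1 x1 w1 x2 w2); set (B := overlap1 y1 h1 y2 h2).
  replace (sx * w1 * (sy * h1) + sx * w2 * (sy * h2) - sx * A * (sy * B))
    with ((sx * sy) * (w1 * h1 + w2 * h2 - A * B)) by ring.
  destruct (Req_dec (w1 * h1 + w2 * h2 - A * B) 0) as [Hz | Hz].
  - rewrite Hz, Rmult_0_r; unfold Rdiv; rewrite !Rinv_0, !Rmult_0_r; reflexivity.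
  - field; repeat split; lra.
Qed.

Lemma box_of_normalised alpha P t k : 0 < alpha ->
  box_of alpha P t k =
  mkBox (pW0 P / Rpower alpha (IZR (pi P)) * (ctr_scale alpha * t (4 + k)%nat)
           + (pbx P + IZR (pm P)) * delta_i alpha P)
        (pH0 P / Rpower alpha (IZR (pj P)) * (ctr_scale alpha * t (6 + k)%nat)
           + (pby P + IZR (pn P)) * delta_j alpha P)
        (pW0 P / Rpower alpha (IZR (pi P)) * width alpha (t k))
        (pH0 P / Rpower alpha (IZR (pj P)) * width alpha (t (2 + k)%nat)).
Proof.
  intros Ha; unfold box_of, delta_i, delta_j, width, ctr_scale.
  assert (Hpos : forall y, Rpower alpha y <> 0)
    by (intros; apply Rgt_not_eq; unfold Rpower; apply exp_pos).
  rewrite !Rpower_plus; f_equal; try ring; field; auto.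
Qed.

Lemma iou_of_normalised alpha P t : 0 < alpha -> params_ok P -> iou_of alpha P t = niou alpha t.
Proof.
  intros Ha [HW HH]; unfold iou_of; rewrite !box_of_normalised by assumption.
  apply IoU_affine; apply Rdiv_lt_0_compat; auto; unfold Rpower; apply exp_pos.
Qed.

Theorem theorem2 (alpha : R) (Ha : 0 < alpha < 1)
  (Hcond : (1 - alpha) / (1 + alpha) < sqrt alpha)
  (P : params) (HP : params_ok P) :
  exists v, is_vertex v /\
    (forall t, in_cube t -> iou_of alpha P v <= iou_of alpha P t) /\
    (forall (P' : params) (v' : nat -> R), params_ok P' -> is_vertex v' ->
       (forall u, is_vertex u -> iou_of alpha P' v' <= iou_of alpha P' u) ->
       iou_of alpha P' v' = iou_of alpha P v).
Proof.
  destruct (vertex_minimum (niou alpha) (niou_local alpha)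
              (niou_quasiconcave alpha Ha Hcond)) as [v [Hv Hmin]].
  exists v; split; [exact Hv | split].
  - intros t Ht; rewrite !iou_of_normalised by (auto; lra); auto.
  - intros P' v' HP' Hv' Hv'min.
    specialize (Hv'min v Hv); specialize (Hmin v' (vertex_cube v' Hv')).
    rewrite !iou_of_normalised in * by (auto; lra); lra.
Qed.
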